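(* Let $p(x,y)=\sum_{i=1}^s a_i x^{\alpha_i}y^{\beta_i}\not\equiv 0$ be a real polynomial with $a_i\neq 0$, distinct exponent vectors $(\alpha_i,\beta_i)\in(\mathbb{N}\cup\{0\})^2$, and $p(0,0)=0$, and suppose there are $A=(A_1,A_2)\in\mathbb{Z}^2$ and $B\in\mathbb{Z}$ with $A_1\alpha_i+A_2\beta_i=B$ for all $i$, where one of the following holds: (a) $A_1>0$, $A_2<0$; (b) $A_1=0$, $A_2>0$; (c) $A_1>0$, $A_2=0$. In cases (a) and (b) index the terms so that $\alpha_1<\alpha_2<\dots<\alpha_s$; in case (c) index them so that $\beta_1<\beta_2<\dots<\beta_s$. Then $(0,0)$ is a point of local minimum of $p$ if and only if $a_1>0$ and $\alpha_1,\beta_1$ are even nonnegative integers.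
   Context: A point of local minimum of $p$ at $(0,0)$ means $p(x,y)\ge p(0,0)$ for all $(x,y)$ in some neighborhood of $(0,0)$. *)

From Stdlib Require Import Reals ZArith Arith.
Open Scope R_scope.

(* p(x,y) = sum_{i < s} a_i x^{alpha_i} y^{beta_i}  (terms indexed 0..s-1;
   the paper's term number k is our index k-1). *)
Fixpoint poly2 (s : nat) (a : nat -> R) (alpha beta : nat -> nat) (x y : R) : R :=
  match s with
  | O => 0
  | S n => poly2 n a alpha beta x y + a n * x ^ (alpha n) * y ^ (beta n)
  end.

Definition local_min_at_origin (f : R -> R -> R) : Prop :=
  exists eps : R, 0 < eps /\
    forall x y : R, Rabs x < eps -> Rabs y < eps -> f 0 0 <= f x y.

(* The linear relation A1 alpha_i + A2 beta_i = B, together with the ordering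
   of the terms, forces the first exponent vector to be componentwise below
   all the others, strictly so in total degree.  Hence
   p = x^alpha_1 y^beta_1 q with q(0,0) = a_1 <> 0.  Near the origin q keeps
   the sign of a_1, so p has a local minimum at (0,0) exactly when a_1 > 0
   and the monomial x^alpha_1 y^beta_1 is nonnegative near (0,0), i.e. when
   both exponents are even. *)

From Stdlib Require Import Reals ZArith Arith.
From Stdlib Require Import Lra Lia Psatz.
Open Scope R_scope.

Lemma pow_le_one (u : R) (n : nat) : 0 <= u <= 1 -> u ^ n <= 1.
Proof.
  intros Hu. rewrite <- (pow1 n). apply pow_incr. lra.
Qed.

Lemma pow_succ_le (u : R) (n : nat) : 0 <= u <= 1 -> u ^ S n <= u.
Proof.
  intros Hu. simpl. pose proof (pow_le_one u n Hu). nra.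
Qed.

Lemma pow_even_nonneg (x : R) (n : nat) : Nat.Even n -> 0 <= x ^ n.
Proof.
  intros [k ->]. rewrite pow_mult. apply pow_le. nra.
Qed.

Lemma pow_opp_odd (x : R) (n : nat) : Nat.Odd n -> (- x) ^ n = - x ^ n.
Proof.
  intros [k ->]. rewrite !pow_add, !pow_mult.
  replace ((- x) ^ 2) with (x ^ 2) by ring. ring.
Qed.

Lemma even_of_pow_opp_pos (x : R) (n : nat) :
  0 < x -> 0 < (- x) ^ n -> Nat.Even n.
Proof.
  intros Hx Hpos. destruct (Nat.Even_or_Odd n) as [Heven | Hodd]; [exact Heven|].
  rewrite pow_opp_odd in Hpos by exact Hodd.
  pose proof (pow_lt x n Hx). lra.
Qed.

Lemma zero_monomial_eq0 (m k : nat) : (0 < m + k)%nat -> 0 ^ m * 0 ^ k = 0.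
Proof.
  intros Hmk. destruct m as [|m].
  - rewrite (pow_i k) by lia. ring.
  - simpl. ring.
Qed.

Lemma Rabs_monomial_le (x y d : R) (m k : nat) :
  d <= 1 -> Rabs x <= d -> Rabs y <= d -> (0 < m + k)%nat ->
  Rabs (x ^ m * y ^ k) <= d.
Proof.
  intros Hd1 Hx Hy Hmk.
  rewrite Rabs_mult, <- !RPow_abs.
  assert (Hx1 : 0 <= Rabs x <= 1) by (split; [apply Rabs_pos | lra]).
  assert (Hy1 : 0 <= Rabs y <= 1) by (split; [apply Rabs_pos | lra]).
  pose proof (pow_le (Rabs x) m (Rabs_pos x)) as Hxm.
  pose proof (pow_le (Rabs y) k (Rabs_pos y)) as Hyk.
  pose proof (pow_le_one _ m Hx1). pose proof (pow_le_one _ k Hy1).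
  destruct m as [|m].
  - destruct k as [|k]; [lia|].
    pose proof (pow_succ_le _ k Hy1). simpl (Rabs x ^ 0). lra.
  - pose proof (pow_succ_le _ m Hx1). nra.
Qed.

Lemma Rabs_monomial_sub_origin_le (x y d : R) (m k : nat) :
  0 <= d <= 1 -> Rabs x <= d -> Rabs y <= d ->
  Rabs (x ^ m * y ^ k - 0 ^ m * 0 ^ k) <= d.
Proof.
  intros Hd Hx Hy.
  destruct (Nat.eq_dec (m + k) 0) as [Hmk | Hmk].
  - replace m with 0%nat by lia. replace k with 0%nat by lia. simpl.
    rewrite Rminus_diag, Rabs_R0. lra.
  - rewrite zero_monomial_eq0, Rminus_0_r by lia.
    apply Rabs_monomial_le; lra || lia.
Qed.

Fixpoint sum_abs_coef (n : nat) (a : nat -> R) : R :=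
  match n with
  | O => 0
  | S k => sum_abs_coef k a + Rabs (a k)
  end.

Lemma sum_abs_coef_nonneg (n : nat) (a : nat -> R) : 0 <= sum_abs_coef n a.
Proof.
  induction n as [|n IH]; simpl; [lra|].
  pose proof (Rabs_pos (a n)). lra.
Qed.

Lemma Rabs_poly2_sub_origin_le (n : nat) (a : nat -> R) (alpha beta : nat -> nat)
  (x y d : R) :
  0 <= d <= 1 -> Rabs x <= d -> Rabs y <= d ->
  Rabs (poly2 n a alpha beta x y - poly2 n a alpha beta 0 0)
    <= d * sum_abs_coef n a.
Proof.
  intros Hd Hx Hy. induction n as [|n IH]; simpl.
  - rewrite Rminus_diag, Rabs_R0. lra.
  - set (mon := x ^ alpha n * y ^ beta n - 0 ^ alpha n * 0 ^ beta n).
    replace (poly2 n a alpha beta x y + a n * x ^ alpha n * y ^ beta n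
             - (poly2 n a alpha beta 0 0 + a n * 0 ^ alpha n * 0 ^ beta n))
      with ((poly2 n a alpha beta x y - poly2 n a alpha beta 0 0) + a n * mon)
      by (unfold mon; ring).
    eapply Rle_trans; [apply Rabs_triang|].
    rewrite Rabs_mult.
    pose proof (Rabs_monomial_sub_origin_le x y d (alpha n) (beta n) Hd Hx Hy)
      as Hmon.
    fold mon in Hmon. pose proof (Rabs_pos (a n)). nra.
Qed.

Definition continuous_at_origin (g : R -> R -> R) : Prop :=
  forall e, 0 < e -> exists d, 0 < d /\
    forall x y, Rabs x < d -> Rabs y < d -> Rabs (g x y - g 0 0) < e.

Lemma poly2_continuous_at_origin (n : nat) (a : nat -> R) (alpha beta : nat -> nat) :
  continuous_at_origin (poly2 n a alpha beta).
Proof.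
  intros e He.
  set (c := sum_abs_coef n a).
  assert (Hc : 0 <= c) by apply sum_abs_coef_nonneg.
  set (d := Rmin 1 (e / (c + 1))).
  assert (He' : 0 < e / (c + 1)) by (apply Rdiv_lt_0_compat; lra).
  assert (Hd0 : 0 < d) by (apply Rmin_glb_lt; lra).
  assert (Hd1 : d <= 1) by apply Rmin_l.
  assert (Hdc : d * c < e).
  { assert (d * (c + 1) <= e).
    { apply (Rle_trans _ (e / (c + 1) * (c + 1))).
      - apply Rmult_le_compat_r; [lra | apply Rmin_r].
      - right. field. lra. }
    lra. }
  exists d. split; [exact Hd0|].
  intros x y Hx Hy.
  eapply Rle_lt_trans; [apply Rabs_poly2_sub_origin_le | exact Hdc]; lra.
Qed.

Lemma poly2_factor_monomial (n : nat) (a : nat -> R) (alpha beta : nat -> nat)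
  (m k : nat) (x y : R) :
  (forall i, (i < n)%nat -> (m <= alpha i /\ k <= beta i)%nat) ->
  poly2 n a alpha beta x y
  = x ^ m * y ^ k
    * poly2 n a (fun i => alpha i - m)%nat (fun i => beta i - k)%nat x y.
Proof.
  intros Hdiv. induction n as [|n IH]; simpl; [ring|].
  rewrite IH by (intros i Hi; apply Hdiv; lia).
  destruct (Hdiv n ltac:(lia)) as [Ha Hb].
  replace (alpha n) with (m + (alpha n - m))%nat at 1 by lia.
  replace (beta n) with (k + (beta n - k))%nat at 1 by lia.
  rewrite !pow_add. ring.
Qed.

Lemma poly2_origin_first_coef (n : nat) (a : nat -> R) (alpha beta : nat -> nat) :
  (0 < n)%nat -> alpha 0%nat = 0%nat -> beta 0%nat = 0%nat ->
  (forall i, (0 < i < n)%nat -> (0 < alpha i + beta i)%nat) ->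
  poly2 n a alpha beta 0 0 = a 0%nat.
Proof.
  intros Hn Ha0 Hb0 Hpos. induction n as [|n IH]; [lia|].
  destruct n as [|n].
  - simpl. rewrite Ha0, Hb0. simpl. ring.
  - change (poly2 (S (S n)) a alpha beta 0 0)
      with (poly2 (S n) a alpha beta 0 0 + a (S n) * 0 ^ alpha (S n) * 0 ^ beta (S n)).
    rewrite IH by (lia || (intros i Hi; apply Hpos; lia)).
    rewrite Rmult_assoc, zero_monomial_eq0 by (apply Hpos; lia). ring.
Qed.

Lemma continuous_at_origin_sign (g : R -> R -> R) :
  continuous_at_origin g -> g 0 0 <> 0 ->
  exists d, 0 < d /\
    forall x y, Rabs x < d -> Rabs y < d -> 0 < g x y * g 0 0.
Proof.
  intros Hg Hg0.
  destruct (Hg (Rabs (g 0 0)) (Rabs_pos_lt _ Hg0)) as [d [Hd Hnear]].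
  exists d. split; [exact Hd|].
  intros x y Hx Hy. specialize (Hnear x y Hx Hy).
  unfold Rabs in *. destruct (Rcase_abs (g 0 0)), (Rcase_abs (g x y - g 0 0));
    nra.
Qed.

Lemma local_min_at_origin_monomial_mul (f g : R -> R -> R) (m k : nat) :
  (0 < m + k)%nat -> continuous_at_origin g -> g 0 0 <> 0 ->
  (forall x y, f x y = x ^ m * y ^ k * g x y) ->
  (local_min_at_origin f <-> (0 < g 0 0 /\ Nat.Even m /\ Nat.Even k)).
Proof.
  intros Hmk Hg Hg0 Hf.
  destruct (continuous_at_origin_sign g Hg Hg0) as [d [Hd Hsign]].
  assert (Hf0 : f 0 0 = 0) by (rewrite Hf, zero_monomial_eq0 by exact Hmk; ring).
  unfold local_min_at_origin. rewrite Hf0. split.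
  - intros [eps [Heps Hmin]].
    set (t := Rmin eps d / 2).
    assert (Ht : 0 < t /\ t < eps /\ t < d).
    { pose proof (Rmin_l eps d). pose proof (Rmin_r eps d).
      assert (0 < Rmin eps d) by (apply Rmin_glb_lt; lra).
      unfold t. lra. }
    assert (Hbox : forall x y, Rabs x = t -> Rabs y = t ->
                     0 <= x ^ m * y ^ k * g x y /\ 0 < g x y * g 0 0).
    { intros x y Hx Hy. rewrite <- Hf.
      split; [apply Hmin | apply Hsign]; lra. }
    assert (Habs_t : Rabs t = t) by (apply Rabs_pos_eq; lra).
    assert (Habs_opp_t : Rabs (- t) = t) by (rewrite Rabs_Ropp; exact Habs_t).
    assert (Hpos_g0 : 0 < g 0 0).
    { destruct (Hbox t t Habs_t Habs_t) as [Hft Hgt].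
      assert (0 < t ^ m * t ^ k) by (apply Rmult_lt_0_compat; apply pow_lt; lra).
      nra. }
    assert (Hpos_mon : forall x y, Rabs x = t -> Rabs y = t -> 0 < x ^ m * y ^ k).
    { intros x y Hx Hy. destruct (Hbox x y Hx Hy) as [Hfxy Hgxy].
      assert (x ^ m * y ^ k <> 0).
      { apply Rmult_integral_contrapositive; split; apply pow_nonzero;
          intros ->; rewrite Rabs_R0 in *; lra. }
      nra. }
    split; [exact Hpos_g0|]. split.
    + apply (even_of_pow_opp_pos t); [lra|].
      pose proof (Hpos_mon (- t) t Habs_opp_t Habs_t).
      pose proof (pow_lt t k ltac:(lra)). nra.
    + apply (even_of_pow_opp_pos t); [lra|].
      pose proof (Hpos_mon t (- t) Habs_t Habs_opp_t).
      pose proof (pow_lt t m ltac:(lra)). nra.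
  - intros [Hpos_g0 [Hm Hk]]. exists d. split; [exact Hd|].
    intros x y Hx Hy. rewrite Hf.
    pose proof (Hsign x y Hx Hy).
    pose proof (pow_even_nonneg x m Hm). pose proof (pow_even_nonneg y k Hk).
    apply Rmult_le_pos; [apply Rmult_le_pos; assumption | nra].
Qed.

Definition first_monomial_strictly_divides (n : nat) (alpha beta : nat -> nat)
  : Prop :=
  forall i, (0 < i < n)%nat ->
    (alpha 0 <= alpha i /\ beta 0 <= beta i /\
     alpha 0 + beta 0 < alpha i + beta i)%nat.

Lemma poly2_local_min_iff_first_term (n : nat) (a : nat -> R)
  (alpha beta : nat -> nat) :
  (0 < n)%nat -> a 0%nat <> 0 -> first_monomial_strictly_divides n alpha beta ->
  poly2 n a alpha beta 0 0 = 0 ->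
  (local_min_at_origin (poly2 n a alpha beta) <->
     (0 < a 0%nat /\ Nat.Even (alpha 0%nat) /\ Nat.Even (beta 0%nat))).
Proof.
  intros Hn Ha0 Hdiv H00.
  set (q := poly2 n a (fun i => alpha i - alpha 0%nat)%nat
                      (fun i => beta i - beta 0%nat)%nat).
  assert (Hfactor : forall x y,
            poly2 n a alpha beta x y = x ^ alpha 0%nat * y ^ beta 0%nat * q x y).
  { intros x y. apply poly2_factor_monomial.
    intros [|i] Hi; [lia|]. destruct (Hdiv (S i)) as [? [? _]]; lia. }
  assert (Hq0 : q 0 0 = a 0%nat).
  { apply poly2_origin_first_coef; [exact Hn | lia | lia |].
    intros i Hi. destruct (Hdiv i Hi) as [? [? ?]]. lia. }
  rewrite <- Hq0.
  apply local_min_at_origin_monomial_mul;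
    [| apply poly2_continuous_at_origin | rewrite Hq0; exact Ha0 | exact Hfactor].
  destruct (Nat.eq_dec (alpha 0%nat + beta 0%nat) 0) as [Hzero | Hnz]; [|lia].
  exfalso. apply Ha0.
  rewrite Hfactor in H00.
  replace (alpha 0%nat) with 0%nat in H00 by lia.
  replace (beta 0%nat) with 0%nat in H00 by lia.
  simpl in H00. lra.
Qed.

Lemma first_monomial_strictly_divides_of_weights (s : nat)
  (alpha beta : nat -> nat) (A1 A2 B : Z) :
  (forall i, (i < s)%nat ->
     (A1 * Z.of_nat (alpha i) + A2 * Z.of_nat (beta i))%Z = B) ->
  (((0 < A1)%Z /\ (A2 < 0)%Z) \/ (A1 = 0%Z /\ (0 < A2)%Z)
     \/ ((0 < A1)%Z /\ A2 = 0%Z)) ->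
  ((((0 < A1)%Z /\ (A2 < 0)%Z) \/ (A1 = 0%Z /\ (0 < A2)%Z)) ->
     forall i j, (i < j)%nat -> (j < s)%nat -> (alpha i < alpha j)%nat) ->
  (((0 < A1)%Z /\ A2 = 0%Z) ->
     forall i j, (i < j)%nat -> (j < s)%nat -> (beta i < beta j)%nat) ->
  first_monomial_strictly_divides s alpha beta.
Proof.
  intros Hweight Hcase Hsort_alpha Hsort_beta i Hi.
  pose proof (Hweight i ltac:(lia)) as Wi.
  pose proof (Hweight 0%nat ltac:(lia)) as W0.
  destruct Hcase as [[C1 C2] | [[C1 C2] | [C1 C2]]].
  - pose proof (Hsort_alpha (or_introl (conj C1 C2)) 0%nat i ltac:(lia) ltac:(lia)).
    nia.
  - pose proof (Hsort_alpha (or_intror (conj C1 C2)) 0%nat i ltac:(lia) ltac:(lia)).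
    subst A1. nia.
  - pose proof (Hsort_beta (conj C1 C2) 0%nat i ltac:(lia) ltac:(lia)).
    subst A2. nia.
Qed.

Theorem mainTheorem4 (s : nat) (a : nat -> R) (alpha beta : nat -> nat)
  (A1 A2 B : Z) :
  (0 < s)%nat ->
  (forall i, (i < s)%nat -> a i <> 0) ->
  (forall i j, (i < s)%nat -> (j < s)%nat -> i <> j ->
     (alpha i, beta i) <> (alpha j, beta j)) ->
  poly2 s a alpha beta 0 0 = 0 ->
  (forall i, (i < s)%nat ->
     (A1 * Z.of_nat (alpha i) + A2 * Z.of_nat (beta i))%Z = B) ->
  (((0 < A1)%Z /\ (A2 < 0)%Z) \/ (A1 = 0%Z /\ (0 < A2)%Z)
     \/ ((0 < A1)%Z /\ A2 = 0%Z)) ->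
  ((((0 < A1)%Z /\ (A2 < 0)%Z) \/ (A1 = 0%Z /\ (0 < A2)%Z)) ->
     forall i j, (i < j)%nat -> (j < s)%nat -> (alpha i < alpha j)%nat) ->
  (((0 < A1)%Z /\ A2 = 0%Z) ->
     forall i j, (i < j)%nat -> (j < s)%nat -> (beta i < beta j)%nat) ->
  (local_min_at_origin (poly2 s a alpha beta) <->
     (0 < a 0%nat /\ Nat.Even (alpha 0%nat) /\ Nat.Even (beta 0%nat))).
Proof.
  (* Distinctness of the exponent vectors already follows from the ordering. *)
  intros Hs Ha _ H00 Hweight Hcase Hsort_alpha Hsort_beta.
  apply poly2_local_min_iff_first_term; [exact Hs | apply Ha, Hs | | exact H00].
  exact (first_monomial_strictly_divides_of_weights
           s alpha beta A1 A2 B Hweight Hcase Hsort_alpha Hsort_beta).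
Qed.
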